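(* Let $r\ge 2$ and, for $1\le j\le r$, let $(\alpha^{[j]}_{h})_{h\in\mathbb{N}}$ be sequences of positive reals with $\alpha^{[j]}_h\neq\alpha^{[j]}_\ell$ for $1\le h<\ell<\infty$, and set $\alpha^{[j]}_0=0$. In the $r$-type urn model I with these weights, started from $\mathbf{n}=(n_1,\dots,n_r)$ with all $n_j\ge1$, let $\mathbf{X}_{\mathbf{n}}=(X^{[1]}_{\mathbf{n}},\dots,X^{[r-1]}_{\mathbf{n}})$. Then for all $\mathbf{k}=(k_1,\dots,k_{r-1})$ with $0\le k_j\le n_j$, \[ \mathbb{P}\{\mathbf{X}_{\mathbf{n}}=\mathbf{k}\}=\sum_{\ell_1=k_1}^{n_1}\cdots\sum_{\ell_{r-1}=k_{r-1}}^{n_{r-1}}\frac{\Big(\prod_{f=1}^{n_r}\alpha^{[r]}_f\Big)\prod_{j=1}^{r-1}\Big(\prod_{h_j=k_j+1}^{n_j}\alpha^{[j]}_{h_j}\Big)}{\Big(\prod_{f=1}^{n_r}\big(\alpha^{[r]}_f+\sum_{j=1}^{r-1}\alpha^{[j]}_{\ell_j}\big)\Big)\prod_{j=1}^{r-1}\Big(\prod_{\substack{h_j=k_j\\ h_j\neq\ell_j}}^{n_j}\big(\alpha^{[j]}_{h_j}-\alpha^{[j]}_{\ell_j}\big)\Big)}. \]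
   Context: $r$-type urn model I: the urn contains balls of types $1,\dots,r$, initially $n_j$ balls of type $j$. At each step, if the urn contains $n'_j$ balls of type $j$ ($1\le j\le r$), a ball of type $\ell$ is drawn with probability $\alpha^{[\ell]}_{n'_\ell}/\sum_{j=1}^{r}\alpha^{[j]}_{n'_j}$ and discarded. The process stops when either all type $r$ balls have been drawn or all balls of types $1,\dots,r-1$ have been drawn (absorbing states $(n'_1,\dots,n'_{r-1},0)$ and $(0,\dots,0,n'_r)$). $X^{[j]}_{\mathbf{n}}$ is the number of type $j$ balls in the urn when the process stops. Empty products equal $1$. *)

From HB Require Import structures.
From mathcomp Require Import all_boot all_order all_algebra.
From mathcomp Require Import reals.
Set Implicit Arguments. Unset Strict Implicit. Unset Printing Implicit Defensive.
Import Order.TTheory GRing.Theory Num.Theory.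
Local Open Scope ring_scope.

(* Urn model I with r = m.+1 types.  Types 1..r-1 are indexed by 'I_m,
   the state of these types is a : 'I_m -> nat; type r is the last type,
   with b balls.  alpha j h = alpha^{[j]}_h (j : 'I_m), beta h = alpha^{[r]}_h. *)

Definition decr (m : nat) (a : 'I_m -> nat) (j : 'I_m) : 'I_m -> nat :=
  fun i => if i == j then (a i).-1 else a i.

Definition absorbing (m : nat) (a : 'I_m -> nat) (b : nat) : bool :=
  (b == 0%N) || [forall j, a j == 0%N].

(* urnP fuel a b k = probability that, started from (a, b), the process stops
   with X^{[j]} = k j for all j < r (fuel large enough: total number of balls). *)
Fixpoint urnP (R : realType) (m : nat) (alpha : 'I_m -> nat -> R)
    (beta : nat -> R) (fuel : nat) (a : 'I_m -> nat) (b : nat)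
    (k : 'I_m -> nat) {struct fuel} : R :=
  if absorbing a b then (if [forall j, a j == k j] then 1 else 0)
  else match fuel with
  | 0%N => 0
  | f.+1 =>
      let W := \sum_(j < m) alpha j (a j) + beta b in
      \sum_(j < m) (alpha j (a j) / W) * urnP alpha beta f (decr a j) b k
      + (beta b / W) * urnP alpha beta f a b.-1 k
  end.

Definition urn_prob (R : realType) (m : nat) (alpha : 'I_m -> nat -> R)
    (beta : nat -> R) (a : 'I_m -> nat) (b : nat) (k : 'I_m -> nat) : R :=
  urnP alpha beta (\sum_(j < m) a j + b)%N a b k.

From HB Require Import structures.
From mathcomp Require Import all_boot all_order all_algebra.
From mathcomp Require Import reals.
From mathcomp Require Import zify ring.
Import Order.TTheory GRing.Theory Num.Theory.
Set Implicit Arguments. Unset Strict Implicit. Unset Printing Implicit Defensive.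
Local Open Scope ring_scope.

(* Write G(k; a, b) for the right-hand side.  Conditioning on the first draw,
   the absorption probabilities satisfy
     W(a, b) P(a, b) = sum_j alpha_j(a_j) P(a - e_j, b) + beta_b P(a, b - 1),
   W(a, b) being the total weight, so by induction on the number of balls it
   suffices that G satisfies the same recurrence and boundary values.  The
   recurrence holds term by term: alpha_j(a_j) times the l-term of G(k; a - e_j, b)
   is the l-term of G(k; a, b) times alpha_j(a_j) - alpha_j(l_j), beta_b times the
   l-term of G(k; a, b - 1) is the l-term of G(k; a, b) times
   beta_b + sum_j alpha_j(l_j), and these factors add up to W(a, b).  At b = 0
   the sum factors over the types into the partial-fraction identity
   sum_(l = k..a) prod_(h <> l) 1/(x_h - x_l) = [k = a] for distinct x; when all
   a_j = 0 the beta factors cancel and we are back at b = 0. *)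

Lemma big_nat_recr_neq (R : Type) (idx : R) (op : Monoid.law idx) (F : nat -> R)
    k a l :
  (k <= a)%N -> a != l ->
  \big[op/idx]_(k <= h < a.+1 | h != l) F h
  = op (\big[op/idx]_(k <= h < a | h != l) F h) (F a).
Proof. by move=> ka al; rewrite big_mkcond big_nat_recr //= al -big_mkcond. Qed.

Lemma big_ltn_neq (R : Type) (idx : R) (op : Monoid.law idx) (F : nat -> R)
    k a l :
  (k < a)%N -> k != l ->
  \big[op/idx]_(k <= h < a | h != l) F h
  = op (F k) (\big[op/idx]_(k.+1 <= h < a | h != l) F h).
Proof. by move=> ka kl; rewrite big_mkcond big_ltn //= kl -big_mkcond. Qed.

Section PartialFractions.

Variables (F : fieldType) (x : nat -> F).
Hypothesis x_inj : injective x.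

Let inv_diff k a l := \prod_(k <= h < a.+1 | h != l) (x h - x l)^-1.

Let sub_x_neq0 h l : h != l -> x h - x l != 0.
Proof. by move=> hl; rewrite subr_eq0 (inj_eq x_inj). Qed.

Let inv_diff_step k a l : (k <= a)%N -> (k <= l <= a.+1)%N ->
  (x a.+1 - x k) * inv_diff k a.+1 l
  = (if (l <= a)%N then inv_diff k a l else 0)
    - (if (k < l)%N then inv_diff k.+1 a.+1 l else 0).
Proof.
move=> ka /andP[kl la]; rewrite /inv_diff.
have [lk|lk] := eqVneq l k.
  rewrite lk ltnn ka (big_nat_recr_neq _ _ (leqW ka)) ?gtn_eqF //= subr0.
  by rewrite mulrCA divff ?mulr1 // sub_x_neq0 ?gtn_eqF.
have [el|el] := eqVneq l a.+1.
  rewrite el ltnn ltnS ka (big_ltn_neq _ _ (leqW ka : (k < a.+2)%N)) ?ltn_eqF //=.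
  rewrite sub0r mulrA -opprB.
  by rewrite mulNr divff ?mulN1r // sub_x_neq0 // ltn_eqF.
have kl' : (k < l)%N by rewrite ltn_neqAle eq_sym lk.
have la' : (l <= a)%N by rewrite -ltnS ltn_neqAle el.
rewrite kl' la' (big_nat_recr_neq _ _ (leqW ka)) 1?eq_sym //=.
rewrite (big_ltn_neq _ _ (ka : (k < a.+1)%N)) ?ltn_eqF //=.
rewrite (big_nat_recr_neq _ _ (ka : (k < a.+1)%N)) 1?eq_sym //=.
have dk : x k - x l != 0 by rewrite sub_x_neq0 // ltn_eqF.
have da : x a.+1 - x l != 0 by rewrite sub_x_neq0 // eq_sym.
by field; rewrite dk da.
Qed.

(* Up to the sign (-1)^(a - k), this is the divided difference of the constant 1
   at x_k, ..., x_a, and inv_diff_sum_rec is the recurrence of divided differences. *)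
Let inv_diff_sum k a := \sum_(k <= l < a.+1) inv_diff k a l.

Let inv_diff_sum_rec k a : (k <= a)%N ->
  (x a.+1 - x k) * inv_diff_sum k a.+1
  = inv_diff_sum k a - inv_diff_sum k.+1 a.+1.
Proof.
move=> ka; rewrite /inv_diff_sum mulr_sumr.
have -> : \sum_(k <= l < a.+1) inv_diff k a l
          = \sum_(k <= l < a.+2) (if (l <= a)%N then inv_diff k a l else 0).
  rewrite [RHS]big_nat_recr ?leqW //= ltnn addr0.
  by apply: eq_big_nat => l /andP[_ la]; rewrite -ltnS la.
have -> : \sum_(k.+1 <= l < a.+2) inv_diff k.+1 a.+1 l
          = \sum_(k <= l < a.+2) (if (k < l)%N then inv_diff k.+1 a.+1 l else 0).
  rewrite [RHS]big_ltn ?ltnS ?leqW //= ltnn add0r.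
  by apply: eq_big_nat => l /andP[kl _]; rewrite kl.
by rewrite -sumrB; apply: eq_big_nat => l kla; apply: inv_diff_step.
Qed.

Lemma sum_prod_inv_diff k a :
  \sum_(k <= l < a.+1) \prod_(k <= h < a.+1 | h != l) (x h - x l)^-1 = (k == a)%:R.
Proof.
rewrite -/(inv_diff_sum k a).
have base c d : (d <= c)%N -> inv_diff_sum c d = (c == d)%:R.
  rewrite leq_eqVlt => /orP[/eqP->|dc]; last by rewrite /inv_diff_sum big_geq // gtn_eqF.
  by rewrite eqxx /inv_diff_sum big_nat1 /inv_diff big_mkcond big_nat1 eqxx.
move: {2}(a - k)%N (leqnn (a - k)) => n; elim: n k a => [|n IH] k a akn.
  by apply: base; lia.
have [ak|] := leqP a k; first exact: base.
case: a akn => // a akn ka.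
apply: (mulfI (sub_x_neq0 (negbT (gtn_eqF ka)))).
by rewrite inv_diff_sum_rec // !IH ?eqSS ?subrr ?ltn_eqF ?mulr0 //; lia.
Qed.

End PartialFractions.

Lemma big_decr (R : Type) (idx : R) (op : Monoid.com_law idx) m
    (F : 'I_m -> nat -> R) a j :
  \big[op/idx]_i F i (decr a j i)
  = op (F j (a j).-1) (\big[op/idx]_(i | i != j) F i (a i)).
Proof.
rewrite (bigD1 j) //= /decr eqxx; congr (op _ _).
by apply: eq_bigr => i /negPf ->.
Qed.

Lemma sum_decr m (a : 'I_m -> nat) j : (0 < a j)%N ->
  (\sum_i a i = (\sum_i decr a j i).+1)%N.
Proof. by move=> aj; rewrite (big_decr _ (fun _ n => n)) (bigD1 j) //= -addSn prednK. Qed.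

Lemma injective_of_distinct_pos (R : numDomainType) (x : nat -> R) :
  x 0%N = 0 -> (forall h, (0 < h)%N -> 0 < x h) ->
  (forall h l, (0 < h)%N -> (h < l)%N -> x h != x l) -> injective x.
Proof.
move=> x0 xpos xneq.
have xlt h l : (h < l)%N -> x h != x l.
  case: h => [|h] hl; last exact: xneq.
  by rewrite x0 eq_sym gt_eqF // xpos.
move=> h l /eqP; apply: contraTeq; case: ltngtP => // hl _; first exact: xlt.
by rewrite eq_sym xlt.
Qed.

Section UrnFormula.

Variables (R : realType) (m N : nat) (alpha : 'I_m -> nat -> R) (beta : nat -> R).
Hypotheses (alpha0 : forall j, alpha j 0%N = 0)
  (alpha_pos : forall j h, (0 < h)%N -> 0 < alpha j h)
  (beta_pos : forall h, (0 < h)%N -> 0 < beta h)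
  (alpha_inj : forall j, injective (alpha j)).

Definition in_box (k a : 'I_m -> nat) (l : {ffun 'I_m -> 'I_N.+1}) : bool :=
  [forall j, (k j <= l j <= a j)%N].

Definition alpha_sum (l : {ffun 'I_m -> 'I_N.+1}) : R := \sum_j alpha j (l j).

Definition beta_prod b : R := \prod_(1 <= f < b.+1) beta f.

Definition shifted_beta_prod s b : R := \prod_(1 <= f < b.+1) (beta f + s).

Definition alpha_prod (k a : 'I_m -> nat) : R :=
  \prod_j \prod_((k j).+1 <= h < (a j).+1) alpha j h.

Definition alpha_diff_prod (k a : 'I_m -> nat) (l : {ffun 'I_m -> 'I_N.+1}) : R :=
  \prod_j \prod_(k j <= h < (a j).+1 | h != l j) (alpha j h - alpha j (l j)).

Definition urn_term k a b l : R :=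
  beta_prod b * alpha_prod k a
  / (shifted_beta_prod (alpha_sum l) b * alpha_diff_prod k a l).

(* The right-hand side of the theorem, indices l_j being taken in 'I_N.+1 for a
   bound N >= max_j a_j. *)
Definition urn_formula k a b : R := \sum_(l | in_box k a l) urn_term k a b l.

Lemma alpha_ge0 j h : 0 <= alpha j h.
Proof. by case: h => [|h]; rewrite ?alpha0 // ltW ?alpha_pos. Qed.

Lemma alpha_sum_ge0 l : 0 <= alpha_sum l.
Proof. by apply: sumr_ge0 => j _; apply: alpha_ge0. Qed.

Lemma shifted_beta_prod_gt0 s b : 0 <= s -> 0 < shifted_beta_prod s b.
Proof.
move=> s0; rewrite /shifted_beta_prod big_nat_cond.
by apply: prodr_gt0 => f /andP[/andP[f0 _] _]; rewrite ltr_wpDr ?beta_pos.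
Qed.

Lemma shifted_beta_prod0 b : shifted_beta_prod 0 b = beta_prod b.
Proof. by apply: eq_bigr => f _; rewrite addr0. Qed.

Lemma alpha_diff_prod_neq0 k a l : alpha_diff_prod k a l != 0.
Proof.
rewrite prodf_seq_neq0; apply/allP => j _; rewrite prodf_seq_neq0.
by apply/allP => h _; apply/implyP => hl; rewrite subr_eq0 (inj_eq (@alpha_inj j)).
Qed.

Lemma alpha_prod_decr k a j : (k j < a j)%N ->
  alpha_prod k a = alpha_prod k (decr a j) * alpha j (a j).
Proof.
move=> kaj; rewrite /alpha_prod.
rewrite (big_decr _ (fun i n => \prod_((k i).+1 <= h < n.+1) alpha i h)).
rewrite (bigD1 j) //= prednK ?(leq_ltn_trans _ kaj) // big_nat_recr //=.
by rewrite mulrAC.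
Qed.

Lemma alpha_diff_prod_decr k a (l : {ffun 'I_m -> 'I_N.+1}) j :
  (k j < a j)%N -> a j != l j ->
  alpha_diff_prod k a l
  = alpha_diff_prod k (decr a j) l * (alpha j (a j) - alpha j (l j)).
Proof.
move=> kaj alj; rewrite /alpha_diff_prod.
rewrite (big_decr _ (fun i n =>
  \prod_(k i <= h < n.+1 | h != l i) (alpha i h - alpha i (l i)))).
rewrite (bigD1 j) //= prednK ?(leq_ltn_trans _ kaj) //.
by rewrite (big_nat_recr_neq _ _ (ltnW kaj) alj) /= mulrAC.
Qed.

Lemma in_box_decr k a (l : {ffun 'I_m -> 'I_N.+1}) j : (0 < a j)%N ->
  in_box k (decr a j) l = in_box k a l && (l j != a j :> nat).
Proof.
move=> aj; apply/forallP/andP => [lk|[/forallP lk lj] i].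
  split; last by have := lk j; rewrite /decr eqxx; lia.
  by apply/forallP => i; have := lk i; rewrite /decr; case: eqP => [->|_]; lia.
by have := lk i; rewrite /decr; case: eqP => [->|_]; lia.
Qed.

Lemma urn_term_beta_step k a b l :
  beta b.+1 * urn_term k a b l
  = urn_term k a b.+1 l * (beta b.+1 + alpha_sum l).
Proof.
rewrite /urn_term.
have -> : beta_prod b.+1 = beta_prod b * beta b.+1 by rewrite /beta_prod big_nat_recr.
have -> : shifted_beta_prod (alpha_sum l) b.+1
          = shifted_beta_prod (alpha_sum l) b * (beta b.+1 + alpha_sum l).
  by rewrite /shifted_beta_prod big_nat_recr.
have P0 := gt_eqF (shifted_beta_prod_gt0 b (alpha_sum_ge0 l)).
have Q0 := alpha_diff_prod_neq0 k a l.
have S0 : beta b.+1 + alpha_sum l != 0.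
  by rewrite gt_eqF ?ltr_wpDr ?alpha_sum_ge0 ?beta_pos.
by field; rewrite P0 Q0 S0.
Qed.

Lemma urn_term_decr_step k a b l j :
  alpha j (a j) * (if in_box k (decr a j) l then urn_term k (decr a j) b l else 0)
  = (if in_box k a l then urn_term k a b l else 0) * (alpha j (a j) - alpha j (l j)).
Proof.
have [aj0|aj] := posnP (a j).
  rewrite aj0 alpha0 mul0r; case: ifP => [/forallP/(_ j)|]; last by rewrite mul0r.
  by rewrite aj0 leqn0 andbC => /andP[/eqP-> _]; rewrite alpha0 subrr mulr0.
rewrite in_box_decr //; case lk: (in_box k a l) => /=; last by rewrite mulr0 mul0r.
have [alj|alj] := eqVneq (l j : nat) (a j); first by rewrite /= alj subrr !mulr0.
have kaj : (k j < a j)%N by move/forallP: lk => /(_ j); move: alj; lia.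
rewrite /= /urn_term (alpha_prod_decr kaj) (alpha_diff_prod_decr kaj) 1?eq_sym //=.
have P0 := gt_eqF (shifted_beta_prod_gt0 b (alpha_sum_ge0 l)).
have Q0 := alpha_diff_prod_neq0 k (decr a j) l.
have D0 : alpha j (a j) - alpha j (l j) != 0.
  by rewrite subr_eq0 (inj_eq (@alpha_inj j)) eq_sym.
by field; rewrite P0 Q0 D0.
Qed.

Lemma urn_formula_rec k a b :
  (\sum_j alpha j (a j) + beta b.+1) * urn_formula k a b.+1
  = \sum_j alpha j (a j) * urn_formula k (decr a j) b.+1
    + beta b.+1 * urn_formula k a b.
Proof.
have -> : \sum_j alpha j (a j) * urn_formula k (decr a j) b.+1
          = \sum_(l | in_box k a l)
              urn_term k a b.+1 l * (\sum_j alpha j (a j) - alpha_sum l).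
  under eq_bigr => j _ do rewrite /urn_formula big_mkcond mulr_sumr.
  rewrite exchange_big /= [RHS]big_mkcond; apply: eq_bigr => l _.
  under eq_bigr => j _ do rewrite urn_term_decr_step.
  by rewrite -mulr_sumr sumrB; case: ifP; rewrite ?mul0r.
rewrite /urn_formula !mulr_sumr -big_split /=; apply: eq_bigr => l _.
by rewrite urn_term_beta_step; ring.
Qed.

Lemma sum_inv_alpha_diff_prod k a : (forall j, a j <= N)%N ->
  \sum_(l | in_box k a l) (alpha_diff_prod k a l)^-1 = \prod_j (k j == a j)%:R.
Proof.
move=> aN.
rewrite /alpha_diff_prod; under [X in X = _]eq_bigr => l _ do rewrite -prodfV.
rewrite (eq_bigl (fun l =>
           l \in family (fun j => [pred i : 'I_N.+1 | k j <= i <= a j]%N)));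
  last by move=> l; apply/forallP/familyP.
rewrite -(bigA_distr_big_dep _ (fun j (i : 'I_N.+1) =>
            (\prod_(k j <= h < (a j).+1 | h != i) (alpha j h - alpha j i))^-1)).
apply: eq_bigr => j _; rewrite -(sum_prod_inv_diff (@alpha_inj j)).
rewrite [RHS](big_nat_widen _ _ N.+1) ?ltnS // [RHS](big_nat_widenl _ 0) // big_mkord.
by apply: (eq_big (op := +%R)) => [i|i _]; rewrite ?prodfV //= ltnS andbC.
Qed.

Lemma urn_formula_b0 k a : (forall j, a j <= N)%N ->
  urn_formula k a 0 = if [forall j, a j == k j] then 1 else 0.
Proof.
move=> aN.
have -> : urn_formula k a 0
          = alpha_prod k a * \sum_(l | in_box k a l) (alpha_diff_prod k a l)^-1.
  rewrite /urn_formula mulr_sumr; apply: eq_bigr => l _.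
  by rewrite /urn_term /beta_prod /shifted_beta_prod !big_geq // !mul1r.
rewrite sum_inv_alpha_diff_prod //; case: ifP => [/forallP ak|/negbT/forallPn[j akj]].
  rewrite big1 => [|j _]; last by rewrite (eqP (ak j)) eqxx.
  by rewrite mulr1 /alpha_prod big1 // => j _; rewrite (eqP (ak j)) big_geq.
by rewrite (bigD1 j) //= eq_sym (negbTE akj) mul0r mulr0.
Qed.

Lemma urn_formula_absorbing k a b : (forall j, a j <= N)%N -> absorbing a b ->
  urn_formula k a b = if [forall j, a j == k j] then 1 else 0.
Proof.
move=> aN /orP[/eqP->|/forallP a0]; first exact: urn_formula_b0.
rewrite -urn_formula_b0 //; apply: eq_bigr => l /forallP lka; rewrite /urn_term.
have -> : alpha_sum l = 0.
  apply: big1 => j _; move: (lka j).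
  by rewrite (eqP (a0 j)) leqn0 andbC => /andP[/eqP-> _].
have B0 := gt_eqF (shifted_beta_prod_gt0 b (lexx 0)); rewrite shifted_beta_prod0 in B0.
rewrite shifted_beta_prod0 /shifted_beta_prod [beta_prod 0]big_geq // big_geq //.
by field; rewrite B0 alpha_diff_prod_neq0.
Qed.

Lemma urnP_urn_formula k fuel a b :
  (\sum_j a j + b <= fuel)%N -> (forall j, a j <= N)%N ->
  urnP alpha beta fuel a b k = urn_formula k a b.
Proof.
elim: fuel a b => [|f IH] a b abf aN /=; case: ifP => abs;
  try by rewrite urn_formula_absorbing.
  by move: abs; rewrite /absorbing (_ : b = 0%N) //; lia.
case: b abf abs => [|b] abf abs; first by rewrite /absorbing eqxx in abs.
set W := \sum_j alpha j (a j) + beta b.+1.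
have W0 : W != 0.
  by rewrite gt_eqF // ltr_wpDl ?beta_pos // sumr_ge0 // => j _; apply: alpha_ge0.
apply: (mulfI W0); rewrite urn_formula_rec mulrDr mulr_sumr IH //; last first.
  by move: abf; rewrite addnS.
congr (_ + _); last by field.
apply: eq_bigr => j _; have [aj0|aj] := posnP (a j).
  by rewrite aj0 alpha0 !mul0r mulr0.
rewrite IH; first by field.
- by move: abf; rewrite (sum_decr aj).
- by move=> i; apply: leq_trans (aN i); rewrite /decr; case: eqP => // _; apply: leq_pred.
Qed.

End UrnFormula.

Theorem theorem3 (R : realType) (m : nat) (hm : (1 <= m)%N)
    (alpha : 'I_m -> nat -> R) (beta : nat -> R)
    (halpha0 : forall j, alpha j 0%N = 0) (hbeta0 : beta 0%N = 0)
    (halpha_pos : forall j h, (1 <= h)%N -> 0 < alpha j h)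
    (hbeta_pos : forall h, (1 <= h)%N -> 0 < beta h)
    (halpha_inj : forall j h l, (1 <= h)%N -> (h < l)%N -> alpha j h != alpha j l)
    (hbeta_inj : forall h l, (1 <= h)%N -> (h < l)%N -> beta h != beta l)
    (a : 'I_m -> nat) (b : nat)
    (ha : forall j, (1 <= a j)%N) (hb : (1 <= b)%N)
    (k : 'I_m -> nat) (hk : forall j, (k j <= a j)%N) :
  urn_prob alpha beta a b k =
  \sum_(l : {ffun 'I_m -> 'I_(\max_(j < m) a j).+1}
          | [forall j, (k j <= l j <= a j)%N])
    ((\prod_(1 <= f < b.+1) beta f)
       * \prod_(j < m) \prod_((k j).+1 <= h < (a j).+1) alpha j h)
    / ((\prod_(1 <= f < b.+1) (beta f + \sum_(j < m) alpha j (l j)))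
       * \prod_(j < m) \prod_(k j <= h < (a j).+1 | h != l j)
            (alpha j h - alpha j (l j))).
Proof.
have alpha_inj j : injective (alpha j).
  exact: injective_of_distinct_pos (halpha0 j) (halpha_pos j) (halpha_inj j).
apply: (urnP_urn_formula halpha0 halpha_pos hbeta_pos alpha_inj) => // j.
exact: leq_bigmax.
Qed.
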